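(* Let $1\le p<\infty$ and let $d_{w,p}$ be a Lorentz sequence space. The set $J^j$ of all operators $T\in L(d_{w,p})$ which can be written as $T=AjB$ with $A\in L(d_{w,p})$ and $B\in L(d_{w,p},\ell_p)$ is a (two-sided) ideal in $L(d_{w,p})$.
   Context: Let $1\le p<\infty$ and let $w=(w_n)$ be a real sequence with $w_1=1$, $w_n\downarrow 0$ and $\sum_n w_n=\infty$. The Lorentz sequence space $d_{w,p}$ is the Banach space of all $x=(x_n)\in c_0$ with $\|x\|_{d_{w,p}}=\big(\sum_{n}w_n (x^*_n)^p\big)^{1/p}<\infty$, where $(x^*_n)$ is the non-increasing rearrangement of $(|x_n|)$. Let $(e_n)$ be the unit vector basis of $d_{w,p}$ and $(f_n)$ that of $\ell_p$. The formal identity $j\colon \ell_p\to d_{w,p}$ is the bounded operator with $j(f_n)=e_n$ (so $j$ maps a sequence to the same sequence). An ideal is a linear subspace $J$ with $ATB\in J$ whenever $T\in J$ and $A,B\in L(d_{w,p})$. *)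

From mathcomp Require Import all_boot all_order all_algebra.
From mathcomp Require Import all_classical all_reals all_analysis.
Set Implicit Arguments. Unset Strict Implicit. Unset Printing Implicit Defensive.
Import Order.TTheory GRing.Theory Num.Theory numFieldNormedType.Exports.
Local Open Scope ring_scope.
Local Open Scope classical_set_scope.

Section Lorentz.
Variable R : realType.

Definition c0 (x : nat -> R) : Prop := cvg_to (x @ \oo) (nbhs (0 : R)).

Definition distr_le (x : nat -> R) (s : R) (n : nat) : Prop :=
  forall F : seq nat, uniq F -> all (fun k => s < `|x k|) F -> (size F <= n)%N.

(* non-increasing rearrangement (0-indexed: rearr x 0 = x^*_1 = sup |x_k|):
   x^*_{n+1} = inf { s >= 0 : #{k : |x_k| > s} <= n } *)
Definition rearr (x : nat -> R) (n : nat) : R :=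
  inf [set s : R | 0 <= s /\ distr_le x s n].

(* (p-th power of) the Lorentz norm, as an extended real *)
Definition dsum (w : nat -> R) (p : R) (x : nat -> R) : \bar R :=
  (\sum_(0 <= n <oo) ((w n * (rearr x n) `^ p)%:E))%E.

Definition in_d (w : nat -> R) (p : R) (x : nat -> R) : Prop :=
  c0 x /\ (dsum w p x < +oo)%E.

Definition norm_d (w : nat -> R) (p : R) (x : nat -> R) : R :=
  (fine (dsum w p x)) `^ p^-1.

Definition lpsum (p : R) (x : nat -> R) : \bar R :=
  (\sum_(0 <= n <oo) ((`|x n| `^ p)%:E))%E.

Definition in_lp (p : R) (x : nat -> R) : Prop := (lpsum p x < +oo)%E.

Definition norm_lp (p : R) (x : nat -> R) : R := (fine (lpsum p x)) `^ p^-1.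

(* bounded linear operators between sequence spaces given by a membership
   predicate and a norm; an operator is a map on sequences, only its
   restriction to the domain space matters. *)
Definition bounded_op (inX : (nat -> R) -> Prop) (nX : (nat -> R) -> R)
    (inY : (nat -> R) -> Prop) (nY : (nat -> R) -> R)
    (T : (nat -> R) -> (nat -> R)) : Prop :=
  (forall x, inX x -> inY (T x)) /\
  (forall (a : R) x y, inX x -> inX y ->
     T (fun n => a * x n + y n) = (fun n => a * T x n + T y n)) /\
  exists C : R, forall x, inX x -> nY (T x) <= C * nX x.

Definition L_d (w : nat -> R) (p : R) := bounded_op (in_d w p) (norm_d w p) (in_d w p) (norm_d w p).
Definition L_d_lp (w : nat -> R) (p : R) := bounded_op (in_d w p) (norm_d w p) (in_lp p) (norm_lp p).

(* formal identity j : l_p -> d_{w,p} *)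
Definition jid (x : nat -> R) : nat -> R := x.

Definition in_Jj (w : nat -> R) (p : R) (T : (nat -> R) -> (nat -> R)) : Prop :=
  L_d w p T /\
  exists A B, L_d w p A /\ L_d_lp w p B /\
    forall x, in_d w p x -> T x = A (jid (B x)).

(* standing assumptions on the weight sequence (0-indexed: w 0 = w_1) *)
Definition lorentz_weight (w : nat -> R) : Prop :=
  w 0%N = 1 /\ (forall n, w n.+1 <= w n) /\ cvg_to (w @ \oo) (nbhs (0 : R)) /\
  (\sum_(0 <= n <oo) ((w n)%:E))%E = +oo%E.

Definition is_ideal (w : nat -> R) (p : R) (J : ((nat -> R) -> (nat -> R)) -> Prop) : Prop :=
  J (fun _ _ => 0) /\
  (forall T S, J T -> J S -> J (fun x n => T x n + S x n)) /\
  (forall (c : R) T, J T -> J (fun x n => c * T x n)) /\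
  (forall T A B, J T -> L_d w p A -> L_d w p B -> J (fun x => A (T (B x)))).
End Lorentz.

(* The only analytic input is that d_{w,p} is a quasi-normed space on which
   x |-> (x_{f n})_n is a contraction whenever f is injective with n <= f n.
   Both follow from the elementary facts (x+y)^*_{2n} <= x^*_n + y^*_n,
   x^*_{n+1} <= x^*_n, (x o f)^*_n <= x^*_n and the monotonicity of w.
   Given T = A1 j B1 and S = A2 j B2, one factors T + S = A j B through the
   interleaving B x := ((B1 x)_0, (B2 x)_0, (B1 x)_1, (B2 x)_1, ...) in l_p and
   A y := A1 (y_{2n})_n + A2 (y_{2n+1})_n; the remaining ideal properties are
   obtained by composing factorizations. *)
From mathcomp Require Import all_boot all_order all_algebra.
From mathcomp Require Import all_classical all_reals all_analysis.
From mathcomp Require Import ring lra.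
Set Implicit Arguments. Unset Strict Implicit. Unset Printing Implicit Defensive.
Import Order.TTheory GRing.Theory Num.Theory numFieldNormedType.Exports.
Local Open Scope ring_scope.
Local Open Scope classical_set_scope.

Section BoundedOperators.
Variable R : realType.
Implicit Types (inX inY inZ : (nat -> R) -> Prop) (nX nY nZ : (nat -> R) -> R).

Lemma bounded_op0 inX nX inY nY :
  inY (fun=> 0) -> nY (fun=> 0) = 0 -> bounded_op inX nX inY nY (fun _ _ => 0).
Proof.
move=> inY0 nY0; split=> [//|]; split=> [a x y _ _|].
  by apply: funext => n; rewrite mulr0 addr0.
by exists 0 => x _; rewrite nY0 mul0r.
Qed.

Lemma bounded_op_comp inX nX inY nY inZ nZ T A :
  (forall y, inY y -> 0 <= nY y) ->
  bounded_op inX nX inY nY T -> bounded_op inY nY inZ nZ A ->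
  bounded_op inX nX inZ nZ (fun x => A (T x)).
Proof.
move=> nY_ge0 [T_in [T_lin [CT HT]]] [A_in [A_lin [CA HA]]]; split.
  by move=> x /T_in /A_in.
split=> [a x y Xx Xy|].
  by rewrite T_lin // A_lin //; apply: T_in.
exists (Num.max CA 0 * CT) => x Xx; rewrite -mulrA.
have CA_le : CA <= Num.max CA 0 by rewrite le_max lexx.
apply: le_trans (HA _ (T_in _ Xx)) _.
apply: le_trans (ler_wpM2r (nY_ge0 _ (T_in _ Xx)) CA_le) _.
by apply: ler_wpM2l (HT _ Xx); rewrite le_max lexx orbT.
Qed.

Lemma bounded_op_combine inX nX inY nY h (K : R) T S :
  0 <= K ->
  (forall a u1 u2 v1 v2, h (fun n => a * u1 n + v1 n) (fun n => a * u2 n + v2 n)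
                         = (fun n => a * h u1 u2 n + h v1 v2 n)) ->
  (forall u v, inY u -> inY v -> inY (h u v) /\ nY (h u v) <= K * (nY u + nY v)) ->
  bounded_op inX nX inY nY T -> bounded_op inX nX inY nY S ->
  bounded_op inX nX inY nY (fun x => h (T x) (S x)).
Proof.
move=> K_ge0 h_lin h_bnd [T_in [T_lin [CT HT]]] [S_in [S_lin [CS HS]]]; split.
  by move=> x Xx; exact: (h_bnd _ _ (T_in _ Xx) (S_in _ Xx)).1.
split=> [a x y Xx Xy|].
  by rewrite T_lin // S_lin // h_lin.
exists (K * (CT + CS)) => x Xx.
apply: le_trans (h_bnd _ _ (T_in _ Xx) (S_in _ Xx)).2 _.
by rewrite -mulrA mulrDl; apply: ler_wpM2l => //; exact: lerD (HT _ Xx) (HS _ Xx).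
Qed.

End BoundedOperators.

Section SeriesFacts.
Variable R : realType.

Lemma nneseries_sum_le (f : nat -> R) N : (forall n, 0 <= f n) ->
  (\sum_(0 <= k <oo) (f k)%:E < +oo)%E ->
  \sum_(0 <= k < N) f k <= fine (\sum_(0 <= k <oo) (f k)%:E)%E.
Proof.
move=> f_ge0 f_fin.
have le_ser : (\sum_(0 <= k < N) (f k)%:E <= \sum_(0 <= k <oo) (f k)%:E)%E.
  by apply: nneseries_lim_ge => n _ _; exact: f_ge0.
have ser_ge0 : (0 <= \sum_(0 <= k <oo) (f k)%:E)%E.
  by apply: nneseries_ge0 => n _ _; exact: f_ge0.
by rewrite -lee_fin fineK ?ge0_fin_numE // -sumEFin.
Qed.

Lemma nneseries_bounded (f : nat -> R) M : (forall n, 0 <= f n) ->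
  (forall N, \sum_(0 <= k < N) f k <= M) ->
  (\sum_(0 <= k <oo) (f k)%:E < +oo)%E /\ fine (\sum_(0 <= k <oo) (f k)%:E)%E <= M.
Proof.
move=> f_ge0 sum_le.
have nd := @ereal_nondecreasing_series R (fun k => (f k)%:E) xpredT 0%N
  (fun n _ _ => f_ge0 n).
have le_M : (\sum_(0 <= k <oo) (f k)%:E <= M%:E)%E.
  rewrite (cvg_lim _ (ereal_nondecreasing_cvgn nd)) //.
  by apply: ge_ereal_sup => _ [n _ <-]; rewrite /= sumEFin lee_fin.
have ser_ge0 : (0 <= \sum_(0 <= k <oo) (f k)%:E)%E.
  by apply: nneseries_ge0 => n _ _; exact: f_ge0.
have lt_oo := le_lt_trans le_M (ltry M).
by split => //; rewrite -lee_fin fineK // ge0_fin_numE.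
Qed.

Lemma fine_nneseries_ge0 (f : nat -> R) : (forall n, 0 <= f n) ->
  0 <= fine (\sum_(0 <= k <oo) (f k)%:E)%E.
Proof. by move=> f_ge0; apply/fine_ge0/nneseries_ge0 => n _ _; exact: f_ge0. Qed.

Lemma ler_sum_nat_widen (f : nat -> R) N M : (forall n, 0 <= f n) -> (N <= M)%N ->
  \sum_(0 <= k < N) f k <= \sum_(0 <= k < M) f k.
Proof.
move=> f_ge0 NM; rewrite (big_cat_nat (leq0n N) NM) /= lerDl.
by apply: sumr_ge0 => i _.
Qed.

Lemma big_nat_double (f : nat -> R) N :
  \sum_(0 <= k < N.*2) f k = \sum_(0 <= n < N) (f n.*2 + f n.*2.+1).
Proof.
elim: N => [|N IH]; first by rewrite !big_geq.
by rewrite doubleS !big_nat_recr //= IH -addrA.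
Qed.

Lemma powR_addr_le (a b q : R) : 0 <= a -> 0 <= b -> 0 <= q ->
  (a + b) `^ q <= 2 `^ q * (a `^ q + b `^ q).
Proof.
move=> a_ge0 b_ge0 q_ge0.
wlog ab : a b a_ge0 b_ge0 / a <= b.
  move=> H; have [|/ltW ba] := leP a b; first exact: H.
  by rewrite addrC [a `^ q + _]addrC; apply: H.
have ab2 : a + b <= 2 * b by rewrite mulr2n mulrDl mul1r lerD2r.
apply: le_trans (ge0_ler_powR q_ge0 _ _ ab2) _; rewrite ?nnegrE ?addr_ge0 ?mulr_ge0 //.
by rewrite powRM // ler_wpM2l ?powR_ge0 // lerDr powR_ge0.
Qed.

End SeriesFacts.

Section Rearrangement.
Variable R : realType.
Implicit Types (x y : nat -> R) (s t : R).

Definition bounded_seq x := exists M, forall k, `|x k| <= M.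

Lemma c0_bounded x : c0 x -> bounded_seq x.
Proof.
move=> x0; have : cvgn x by apply/cvg_ex; exists 0.
move/cvg_seq_bounded => [M [_ HM]].
by exists (M + 1) => k; apply: (HM (M + 1)); rewrite ?ltrDl.
Qed.

Lemma bounded_seqD x y : bounded_seq x -> bounded_seq y ->
  bounded_seq (fun k => x k + y k).
Proof.
move=> [M HM] [N HN]; exists (M + N) => k.
by apply: le_trans (ler_normD _ _) _; apply: lerD.
Qed.

Lemma c0D x y : c0 x -> c0 y -> c0 (fun k => x k + y k).
Proof. by move=> x0 y0; rewrite /c0 -[0 : R]addr0; exact: cvgD. Qed.

Lemma c0Z c x : c0 x -> c0 (fun k => c * x k).
Proof. by move=> x0; rewrite /c0 -(mulr0 c); exact: cvgM (cvg_cst c) x0. Qed.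

Lemma c0_comp x (f : nat -> nat) : (forall n, (n <= f n)%N) -> c0 x ->
  c0 (fun k => x (f k)).
Proof.
move=> f_ge x0; have f_oo : f @ \oo --> \oo.
  by apply/cvgnyPge => A; near=> n; apply: leq_trans (f_ge n); near: n; exists A.
exact: cvg_comp f_oo x0.
Unshelve. all: by end_near.
Qed.

Lemma distr_le_bound x M n : (forall k, `|x k| <= M) -> distr_le x M n.
Proof. by move=> HM [|k F] //= _ /andP[]; rewrite ltNge HM. Qed.

Lemma distr_leS x s n : distr_le x s n -> distr_le x s n.+1.
Proof. by move=> xs F uF aF; apply/leqW/xs. Qed.

Lemma distr_leD x y s t n m : distr_le x s n -> distr_le y t m ->
  distr_le (fun k => x k + y k) (s + t) (n + m).
Proof.
move=> xs yt F uF aF.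
rewrite -(count_predC (fun k => s < `|x k|) F) leq_add // -size_filter.
  apply: xs; first exact: filter_uniq.
  by apply/allP => k; rewrite mem_filter => /andP[].
apply: yt; first exact: filter_uniq.
apply/allP => k; rewrite mem_filter /= -leNgt => /andP[xk kF].
have := lt_le_trans (allP aF k kF) (ler_normD (x k) (y k)).
by apply: contraLR; rewrite -!leNgt => yk; exact: lerD.
Qed.

Lemma distr_leZ x c s n : distr_le x s n -> distr_le (fun k => c * x k) (`|c| * s) n.
Proof.
move=> xs F uF aF; apply: xs => //; apply: sub_all aF => k /=.
rewrite normrM; have [->|c0] := eqVneq c 0; first by rewrite normr0 !mul0r ltxx.
by rewrite ltr_pM2l // normr_gt0.
Qed.

Lemma distr_le_comp x (f : nat -> nat) s n : injective f -> distr_le x s n ->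
  distr_le (fun k => x (f k)) s n.
Proof.
move=> f_inj xs F uF aF; rewrite -(size_map f).
by apply: xs; rewrite ?map_inj_uniq ?all_map.
Qed.

Lemma rearr_set_lbound x n : has_lbound [set s : R | 0 <= s /\ distr_le x s n].
Proof. by exists 0 => s []. Qed.

Lemma rearr_ge0 x n : 0 <= rearr x n.
Proof.
rewrite /rearr; set S := [set s : R | 0 <= s /\ distr_le x s n].
have [[s Ss]|S0] := pselect (S !=set0).
  by apply: lb_le_inf; [exists s | move=> t []].
by rewrite (_ : S = set0) ?inf0 //; apply/seteqP; split => // t St; apply: S0; exists t.
Qed.

Lemma rearr_le x s n : 0 <= s -> distr_le x s n -> rearr x n <= s.
Proof. by move=> s_ge0 xs; apply: (ge_inf (rearr_set_lbound x n)). Qed.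

Lemma rearr_approx x n e : bounded_seq x -> 0 < e ->
  exists s, [/\ 0 <= s, distr_le x s n & s < rearr x n + e].
Proof.
move=> [M HM] e_gt0; have M_ge0 : 0 <= M by apply: le_trans (HM 0%N).
have S_M : [set s : R | 0 <= s /\ distr_le x s n] M by split => //; exact: distr_le_bound.
have [s [s_ge0 xs] lt_s] := inf_adherent e_gt0 (conj (ex_intro _ M S_M) (rearr_set_lbound x n)).
by exists s.
Qed.

Lemma rearr_le_lincomb y n x1 m1 x2 m2 c1 c2 :
  bounded_seq x1 -> bounded_seq x2 -> 0 <= c1 -> 0 <= c2 ->
  (forall s t, 0 <= s -> 0 <= t -> distr_le x1 s m1 -> distr_le x2 t m2 ->
     distr_le y (c1 * s + c2 * t) n) ->
  rearr y n <= c1 * rearr x1 m1 + c2 * rearr x2 m2.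
Proof.
move=> b1 b2 c1_ge0 c2_ge0 H; apply/ler_addgt0Pr => e e_gt0.
have c_gt0 : 0 < c1 + c2 + 1 by rewrite ltr_wpDl // addr_ge0.
set d := e / (c1 + c2 + 1); have d_gt0 : 0 < d by rewrite divr_gt0.
have [s [s_ge0 x1s lt_s]] := rearr_approx m1 b1 d_gt0.
have [t [t_ge0 x2t lt_t]] := rearr_approx m2 b2 d_gt0.
apply: le_trans (rearr_le _ (H s t s_ge0 t_ge0 x1s x2t)) _.
  by rewrite addr_ge0 // mulr_ge0.
have -> : e = (c1 + c2 + 1) * d by rewrite /d mulrC divfK // gt_eqF.
have := ler_wpM2l c1_ge0 (ltW lt_s); have := ler_wpM2l c2_ge0 (ltW lt_t).
have := ltW d_gt0; nra.
Qed.

Lemma rearrD x y n : bounded_seq x -> bounded_seq y ->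
  rearr (fun k => x k + y k) n.*2 <= rearr x n + rearr y n.
Proof.
move=> bx b_y; rewrite -[rearr x n]mul1r -[rearr y n]mul1r.
by apply: rearr_le_lincomb => // s t _ _ xs yt; rewrite !mul1r -addnn; exact: distr_leD.
Qed.

Lemma rearr_le_lincomb1 y n x m c : bounded_seq x -> 0 <= c ->
  (forall s, 0 <= s -> distr_le x s m -> distr_le y (c * s) n) ->
  rearr y n <= c * rearr x m.
Proof.
move=> bx c_ge0 H; rewrite -[_ * _]addr0 -(mul0r (rearr x m)).
by apply: rearr_le_lincomb => // s t s_ge0 _ xs _; rewrite mul0r addr0; apply: H.
Qed.

Lemma rearrS x n : bounded_seq x -> rearr x n.+1 <= rearr x n.
Proof.
move=> bx; rewrite -[rearr x n]mul1r.
by apply: rearr_le_lincomb1 => // s _ xs; rewrite mul1r; exact: distr_leS.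
Qed.

Lemma rearrZ c x n : bounded_seq x -> rearr (fun k => c * x k) n <= `|c| * rearr x n.
Proof. by move=> bx; apply: rearr_le_lincomb1 => // s _; exact: distr_leZ. Qed.

Lemma rearr_comp x (f : nat -> nat) n : bounded_seq x -> injective f ->
  rearr (fun k => x (f k)) n <= rearr x n.
Proof.
move=> bx f_inj; rewrite -[rearr x n]mul1r.
by apply: rearr_le_lincomb1 => // s _ xs; rewrite mul1r; exact: distr_le_comp.
Qed.

End Rearrangement.

Section LorentzWeight.
Variables (R : realType) (w : nat -> R).
Hypothesis w_weight : lorentz_weight w.

Lemma lorentz_weight_nonincr : nonincreasing_seq w.
Proof. by case: w_weight => _ [w_decr _]; apply/nonincreasing_seqP. Qed.

Lemma lorentz_weight_ge0 n : 0 <= w n.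
Proof.
case: w_weight => _ [_ [w_cvg0 _]].
have -> : 0 = limn w by rewrite (cvg_lim _ w_cvg0).
by apply: nonincreasing_cvgn_ge lorentz_weight_nonincr _ n; apply/cvg_ex; exists 0.
Qed.

End LorentzWeight.

Section LorentzSpace.
Variables (R : realType) (p : R) (w : nat -> R).
Hypothesis p_gt0 : 0 < p.
Hypothesis w_ge0 : forall n, 0 <= w n.
Hypothesis w_nonincr : nonincreasing_seq w.
Implicit Types (x y u v : nat -> R).

Let p_ge0 : 0 <= p. Proof. exact: ltW. Qed.
Let pV_ge0 : 0 <= p^-1. Proof. by rewrite invr_ge0. Qed.
Let p_neq0 : p != 0. Proof. by rewrite gt_eqF. Qed.
Let pV_neq0 : p^-1 != 0. Proof. by rewrite invr_eq0. Qed.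

Definition dterm x k := w k * rearr x k `^ p.

Definition dnormp x := fine (dsum w p x).

Definition lpnormp u := fine (lpsum p u).

Lemma dterm_ge0 x k : 0 <= dterm x k.
Proof. by rewrite mulr_ge0 ?powR_ge0. Qed.

Lemma dnormp_ge0 x : 0 <= dnormp x.
Proof. exact/fine_nneseries_ge0/dterm_ge0. Qed.

Lemma lpnormp_ge0 u : 0 <= lpnormp u.
Proof. by apply: fine_nneseries_ge0 => n; exact: powR_ge0. Qed.

Lemma norm_d_ge0 x : 0 <= norm_d w p x.
Proof. exact: powR_ge0. Qed.

Lemma sum_dterm_le x N : in_d w p x -> \sum_(0 <= k < N) dterm x k <= dnormp x.
Proof. by move=> [_ x_fin]; apply: nneseries_sum_le => //; exact: dterm_ge0. Qed.

Lemma in_d_sum_dterm x M : c0 x -> (forall N, \sum_(0 <= k < N) dterm x k <= M) ->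
  in_d w p x /\ dnormp x <= M.
Proof. by move=> x0 /(nneseries_bounded (dterm_ge0 x)) []. Qed.

Lemma sum_lpterm_le u N : in_lp p u -> \sum_(0 <= k < N) `|u k| `^ p <= lpnormp u.
Proof. by move=> u_fin; apply: nneseries_sum_le => // n; exact: powR_ge0. Qed.

Lemma in_lp_sum_lpterm u M : (forall N, \sum_(0 <= k < N) `|u k| `^ p <= M) ->
  in_lp p u /\ lpnormp u <= M.
Proof. exact/nneseries_bounded/(fun n => powR_ge0 _ _). Qed.

Lemma norm_dE x : norm_d w p x = dnormp x `^ p^-1.
Proof. by []. Qed.

Lemma norm_lpE u : norm_lp p u = lpnormp u `^ p^-1.
Proof. by []. Qed.

Lemma norm_d_le x M : 0 <= M -> dnormp x <= M -> norm_d w p x <= M `^ p^-1.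
Proof. by move=> M_ge0; apply: ge0_ler_powR; rewrite ?nnegrE ?dnormp_ge0. Qed.

Lemma norm_lp_le u M : 0 <= M -> lpnormp u <= M -> norm_lp p u <= M `^ p^-1.
Proof. by move=> M_ge0; apply: ge0_ler_powR; rewrite ?nnegrE ?lpnormp_ge0. Qed.

Lemma dterm_pairD x y n : bounded_seq x -> bounded_seq y ->
  dterm (fun k => x k + y k) n.*2 + dterm (fun k => x k + y k) n.*2.+1
  <= (2 * 2 `^ p) * (dterm x n + dterm y n).
Proof.
move=> bx b_y; set z := fun k => x k + y k.
set r := rearr x n + rearr y n.
have r_ge0 : 0 <= r by rewrite addr_ge0 ?rearr_ge0.
have rz_le : rearr z n.*2 <= r by apply: rearrD.
have rzS_le : rearr z n.*2.+1 <= r by apply: le_trans (rearrS _ (bounded_seqD bx b_y)) rz_le.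
have n_le2 : (n <= n.*2)%N by rewrite -addnn leq_addr.
have pow_le m : (n <= m)%N -> rearr z m <= r -> w m * rearr z m `^ p <= w n * r `^ p.
  move=> nm rzm_le; apply: ler_pM; rewrite ?powR_ge0 ?w_nonincr //.
  by apply: ge0_ler_powR; rewrite ?nnegrE ?rearr_ge0.
have r_le := powR_addr_le (rearr_ge0 x n) (rearr_ge0 y n) p_ge0.
apply: le_trans (lerD (pow_le _ n_le2 rz_le) (pow_le _ (leqW n_le2) rzS_le)) _.
have := ler_wpM2l (w_ge0 n) r_le; rewrite /dterm; nra.
Qed.

Lemma in_dD x y : in_d w p x -> in_d w p y ->
  in_d w p (fun k => x k + y k) /\
  norm_d w p (fun k => x k + y k)
    <= (2 * 2 `^ p) `^ p^-1 * 2 `^ p^-1 * (norm_d w p x + norm_d w p y).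
Proof.
move=> dx dy; set z := fun k => x k + y k.
have bx := c0_bounded dx.1; have b_y := c0_bounded dy.1.
have K_ge0 : 0 <= 2 * 2 `^ p :> R by rewrite mulr_ge0 ?powR_ge0.
have sum_le N : \sum_(0 <= k < N) dterm z k <= 2 * 2 `^ p * (dnormp x + dnormp y).
  apply: le_trans (ler_sum_nat_widen (dterm_ge0 z) (leq_addr N N)) _.
  rewrite addnn big_nat_double.
  apply: le_trans (ler_sum _ (fun n _ => dterm_pairD n bx b_y)) _.
  rewrite -mulr_sumr ler_wpM2l // big_split /=.
  by apply: lerD; apply: sum_dterm_le.
have [dz z_le] := in_d_sum_dterm (c0D dx.1 dy.1) sum_le.
split; first exact: dz.
have S_ge0 := addr_ge0 (dnormp_ge0 x) (dnormp_ge0 y).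
apply: le_trans (norm_d_le (mulr_ge0 K_ge0 S_ge0) z_le) _.
rewrite (powRM _ K_ge0 S_ge0) -mulrA ler_wpM2l ?powR_ge0 //.
by rewrite !norm_dE; exact: powR_addr_le (dnormp_ge0 x) (dnormp_ge0 y) pV_ge0.
Qed.

Lemma in_dZ c x : in_d w p x ->
  in_d w p (fun k => c * x k) /\ norm_d w p (fun k => c * x k) <= `|c| * norm_d w p x.
Proof.
move=> dx; set z := fun k => c * x k.
have cp_ge0 : 0 <= `|c| `^ p := powR_ge0 _ _.
have term_le n : dterm z n <= `|c| `^ p * dterm x n.
  rewrite /dterm mulrCA ler_wpM2l // -powRM ?rearr_ge0 //.
  apply: ge0_ler_powR; rewrite ?nnegrE ?rearr_ge0 //.
  - by rewrite mulr_ge0 ?rearr_ge0.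
  - exact: rearrZ (c0_bounded dx.1).
have sum_le N : \sum_(0 <= k < N) dterm z k <= `|c| `^ p * dnormp x.
  apply: le_trans (ler_sum _ (fun n _ => term_le n)) _.
  by rewrite -mulr_sumr ler_wpM2l ?sum_dterm_le.
have [dz z_le] := in_d_sum_dterm (c0Z c dx.1) sum_le.
split; first exact: dz.
apply: le_trans (norm_d_le (mulr_ge0 cp_ge0 (dnormp_ge0 x)) z_le) _.
by rewrite (powRM _ cp_ge0 (dnormp_ge0 x)) -powRrM mulfV // powRr1.
Qed.

Lemma in_d_comp x (f : nat -> nat) : injective f -> (forall n, (n <= f n)%N) ->
  in_d w p x -> in_d w p (fun k => x (f k)) /\ norm_d w p (fun k => x (f k)) <= norm_d w p x.
Proof.
move=> f_inj f_ge dx; set z := fun k => x (f k).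
have term_le n : dterm z n <= dterm x n.
  rewrite /dterm ler_wpM2l //; apply: ge0_ler_powR; rewrite ?nnegrE ?rearr_ge0 //.
  exact: rearr_comp (c0_bounded dx.1) f_inj.
have sum_le N : \sum_(0 <= k < N) dterm z k <= dnormp x.
  by apply: le_trans (sum_dterm_le N dx); apply: ler_sum => n _; exact: term_le.
have [dz z_le] := in_d_sum_dterm (c0_comp f_ge dx.1) sum_le.
split; first exact: dz.
by apply: norm_d_le z_le; exact: dnormp_ge0.
Qed.

Lemma in_d0 : in_d w p (fun=> 0) /\ norm_d w p (fun=> 0) = 0.
Proof.
have rearr0 k : rearr (fun=> 0 : R) k = 0.
  apply/le_anti; rewrite rearr_ge0 andbT; apply: rearr_le (lexx 0) _.
  by apply: distr_le_bound => i; rewrite normr0.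
have sum_le N : \sum_(0 <= k < N) dterm (fun=> 0) k <= 0.
  by rewrite big1 // => k _; rewrite /dterm rearr0 powR0 ?mulr0.
have [d0 le0] := in_d_sum_dterm (cvg_cst 0) sum_le.
split; first exact: d0.
rewrite norm_dE (_ : dnormp _ = 0) ?powR0 //.
by apply/le_anti; rewrite le0 dnormp_ge0.
Qed.

Definition interleave u v k := if odd k then v k./2 else u k./2.

Lemma interleave_double u v k : interleave u v k.*2 = u k.
Proof. by rewrite /interleave odd_double doubleK. Qed.

Lemma interleave_doubleS u v k : interleave u v k.*2.+1 = v k.
Proof. by rewrite /interleave /= odd_double uphalf_double. Qed.

Lemma in_lp_interleave u v : in_lp p u -> in_lp p v ->
  in_lp p (interleave u v) /\
  norm_lp p (interleave u v) <= 2 `^ p^-1 * (norm_lp p u + norm_lp p v).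
Proof.
move=> lu lv.
have sum_le N : \sum_(0 <= k < N) `|interleave u v k| `^ p <= lpnormp u + lpnormp v.
  apply: le_trans (ler_sum_nat_widen (fun k => powR_ge0 _ _) (leq_addr N N)) _.
  rewrite addnn big_nat_double.
  under eq_bigr do rewrite interleave_double interleave_doubleS.
  by rewrite big_split; apply: lerD; apply: sum_lpterm_le.
have [l_uv uv_le] := in_lp_sum_lpterm sum_le.
split; first exact: l_uv.
have S_ge0 := addr_ge0 (lpnormp_ge0 u) (lpnormp_ge0 v).
apply: le_trans (norm_lp_le S_ge0 uv_le) _; rewrite !norm_lpE.
exact: powR_addr_le (lpnormp_ge0 u) (lpnormp_ge0 v) pV_ge0.
Qed.

Lemma in_lp0 : in_lp p (fun=> 0) /\ norm_lp p (fun=> 0) = 0.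
Proof.
have sum_le N : \sum_(0 <= k < N) `|(fun=> 0 : R) k| `^ p <= 0.
  by rewrite big1 // => k _; rewrite normr0 powR0.
have [l0 le0] := in_lp_sum_lpterm sum_le.
split; first exact: l0.
rewrite norm_lpE (_ : lpnormp _ = 0) ?powR0 //.
by apply/le_anti; rewrite le0 lpnormp_ge0.
Qed.

Lemma L_d0 : L_d w p (fun _ _ => 0).
Proof. exact: bounded_op0 in_d0.1 in_d0.2. Qed.

Lemma L_d_lp0 : L_d_lp w p (fun _ _ => 0).
Proof. exact: bounded_op0 in_lp0.1 in_lp0.2. Qed.

Lemma L_d_comp T A : L_d w p T -> L_d w p A -> L_d w p (fun x => A (T x)).
Proof. exact/bounded_op_comp/(fun y _ => norm_d_ge0 y). Qed.

Lemma L_d_lp_comp T B : L_d w p T -> L_d_lp w p B -> L_d_lp w p (fun x => B (T x)).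
Proof. exact/bounded_op_comp/(fun y _ => norm_d_ge0 y). Qed.

Lemma L_dD T S : L_d w p T -> L_d w p S -> L_d w p (fun x n => T x n + S x n).
Proof.
apply: (bounded_op_combine (h := fun u v n => u n + v n)) in_dD.
  by rewrite !mulr_ge0 ?powR_ge0.
by move=> a u1 u2 v1 v2; apply: funext => n; ring.
Qed.

Lemma L_dZ c : L_d w p (fun y n => c * y n).
Proof.
split=> [y /(in_dZ c) []//|]; split=> [a x y _ _|].
  by apply: funext => n; ring.
by exists `|c| => y /(in_dZ c) [].
Qed.

Lemma L_d_comp_inj (f : nat -> nat) : injective f -> (forall n, (n <= f n)%N) ->
  L_d w p (fun y k => y (f k)).
Proof.
move=> f_inj f_ge; split=> [y /(in_d_comp f_inj f_ge) []//|]; split=> [//|].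
by exists 1 => y /(in_d_comp f_inj f_ge) []; rewrite mul1r.
Qed.

Lemma L_d_lp_interleave B1 B2 : L_d_lp w p B1 -> L_d_lp w p B2 ->
  L_d_lp w p (fun x => interleave (B1 x) (B2 x)).
Proof.
apply: (bounded_op_combine (h := interleave)) in_lp_interleave; first exact: powR_ge0.
by move=> a u1 u2 v1 v2; apply: funext => k; rewrite /interleave; case: odd.
Qed.

Lemma in_Jj0 : in_Jj w p (fun _ _ => 0).
Proof.
split; first exact: L_d0.
exists (fun _ _ => 0), (fun _ _ => 0).
by split; last split; [exact: L_d0 | exact: L_d_lp0 |].
Qed.

Lemma in_JjD T S : in_Jj w p T -> in_Jj w p S -> in_Jj w p (fun x n => T x n + S x n).
Proof.
move=> [LT [A1 [B1 [LA1 [LB1 T_eq]]]]] [LS [A2 [B2 [LA2 [LB2 S_eq]]]]].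
have n_le2 n : (n <= n.*2)%N by rewrite -addnn leq_addr.
have L_even : L_d w p (fun y k => y k.*2) by apply: L_d_comp_inj => //; exact: double_inj.
have L_odd : L_d w p (fun y k => y k.*2.+1).
  by apply: L_d_comp_inj => [m n [/double_inj]|n] //; exact: leqW.
split; first exact: L_dD.
exists (fun y n => A1 (fun k => y k.*2) n + A2 (fun k => y k.*2.+1) n).
exists (fun x => interleave (B1 x) (B2 x)).
split; first by apply: L_dD; apply: L_d_comp.
split; first exact: L_d_lp_interleave.
move=> x dx; rewrite (T_eq x dx) (S_eq x dx) /jid.
have -> : (fun k => interleave (B1 x) (B2 x) k.*2) = B1 x.
  by apply: funext => k; exact: interleave_double.
have -> : (fun k => interleave (B1 x) (B2 x) k.*2.+1) = B2 x.
  by apply: funext => k; exact: interleave_doubleS.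
by [].
Qed.

Lemma in_JjZ c T : in_Jj w p T -> in_Jj w p (fun x n => c * T x n).
Proof.
move=> [LT [A [B [LA [LB T_eq]]]]]; split; first exact: L_d_comp LT (L_dZ c).
exists (fun y n => c * A y n), B; split; first exact: L_d_comp LA (L_dZ c).
by split; [exact: LB | move=> x dx; rewrite (T_eq x dx)].
Qed.

Lemma in_Jj_comp T A B : in_Jj w p T -> L_d w p A -> L_d w p B ->
  in_Jj w p (fun x => A (T (B x))).
Proof.
move=> [LT [A1 [B1 [LA1 [LB1 T_eq]]]]] LA LB.
split; first exact: L_d_comp (L_d_comp LB LT) LA.
exists (fun y => A (A1 y)), (fun x => B1 (B x)).
split; first exact: L_d_comp LA1 LA.
split; first exact: L_d_lp_comp LB LB1.
by move=> x dx; rewrite (T_eq _ (LB.1 x dx)).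
Qed.

End LorentzSpace.

Theorem proposition4p1 (R : realType) (p : R) (w : nat -> R) :
  1 <= p -> lorentz_weight w -> is_ideal w p (in_Jj w p).
Proof.
move=> p_ge1 w_weight.
have p_gt0 : 0 < p by apply: lt_le_trans p_ge1.
have w_ge0 := lorentz_weight_ge0 w_weight.
have w_nonincr := lorentz_weight_nonincr w_weight.
split; first exact: in_Jj0.
split; first exact: in_JjD.
split; first exact: in_JjZ.
exact: in_Jj_comp.
Qed.
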